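(* Let $\mathcal{Y}=\{1,\dots,m\}$ be a finite set of classes and let $\Delta(\mathcal{Y})$ denote the set of probability vectors on $\mathcal{Y}$. Let $u:\mathcal{Y}\times\mathcal{Y}\to\mathbb{R}_+$ be a nonnegative utility function that is nondegenerate, i.e. for every $y\in\mathcal{Y}$ there exists $a\in\mathcal{Y}$ with $u(a,y)>0$. Let $\ell:\Delta(\mathcal{Y})\times\mathcal{Y}\to\mathbb{R}$ be a strictly proper loss function, i.e. for every $q\in\Delta(\mathcal{Y})$, $q$ is the unique minimizer over $p\in\Delta(\mathcal{Y})$ of $\bar\ell(p,q)\equiv\sum_{y\in\mathcal{Y}} q_y\,\ell(p,y)$. Define the utility-weighted loss $\ell^u(p,y)\equiv\sum_{y'\in\mathcal{Y}}\ell(p,y')\,u(y',y)$ and its expectation $\bar\ell^u(p,q)\equiv\sum_{y\in\mathcal{Y}} q_y\,\ell^u(p,y)$, and the expected utility $\bar u(y,q)\equiv\sum_{y'\in\mathcal{Y}}u(y,y')\,q_{y'}$. Then for every $q\in\Delta(\mathcal{Y})$, the problem $\min_{p\in\Delta(\mathcal{Y})}\bar\ell^u(p,q)$ has a unique minimizer $p^u(q)$, given for each class $y$ by $$p^u_y(q)=\frac{\bar u(y,q)}{\sum_{y'\in\mathcal{Y}}\bar u(y',q)}.$$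
   Context: $p_y,q_y$ denote the $y$-th components of probability vectors $p,q\in\Delta(\mathcal{Y})$. *)

From mathcomp Require Import all_boot all_order all_algebra.
Set Implicit Arguments. Unset Strict Implicit. Unset Printing Implicit Defensive.
Import Order.TTheory GRing.Theory Num.Theory.
Local Open Scope ring_scope.

(* Probability vectors on the class set 'I_m = {0,...,m-1} (i.e. {1,...,m}). *)
Definition prob_vec (R : realFieldType) (m : nat) (p : 'I_m -> R) : Prop :=
  (forall y, 0 <= p y) /\ \sum_(y < m) p y = 1.

Definition exp_loss (R : realFieldType) (m : nat)
  (l : ('I_m -> R) -> 'I_m -> R) (p q : 'I_m -> R) : R :=
  \sum_(y < m) q y * l p y.

Definition strictly_proper (R : realFieldType) (m : nat)
  (l : ('I_m -> R) -> 'I_m -> R) : Prop :=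
  forall q, prob_vec q ->
    forall p, prob_vec p -> p <> q -> exp_loss l q q < exp_loss l p q.

Definition util_loss (R : realFieldType) (m : nat)
  (l : ('I_m -> R) -> 'I_m -> R) (u : 'I_m -> 'I_m -> R) (p : 'I_m -> R) (y : 'I_m) : R :=
  \sum_(y' < m) l p y' * u y' y.

Definition exp_util (R : realFieldType) (m : nat)
  (u : 'I_m -> 'I_m -> R) (y : 'I_m) (q : 'I_m -> R) : R :=
  \sum_(y' < m) u y y' * q y'.

(** Exchanging the two sums shows that the expected utility-weighted loss is
    the expected original loss against the unnormalised weights
    [w y = exp_util u y q].  Dividing [w] by its total, which is positive by
    nondegeneracy of [u], gives a probability vector and scales the expected
    loss by a positive constant, so strict properness of [l] makes the
    normalised [w] the unique minimiser. *)
From mathcomp Require Import all_boot all_order all_algebra.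
Set Implicit Arguments. Unset Strict Implicit. Unset Printing Implicit Defensive.
Import Order.TTheory GRing.Theory Num.Theory.
Local Open Scope ring_scope.

Section UtilityWeightedLoss.
Variables (R : realFieldType) (m : nat).

Definition normalize (w : 'I_m -> R) : 'I_m -> R :=
  fun y => w y / \sum_(y' < m) w y'.

Lemma prob_vec_exists_gt0 (q : 'I_m -> R) : prob_vec q -> exists y, 0 < q y.
Proof.
case=> q_ge0 q_sum1; apply/existsP; apply: contraT => /existsPn q_le0.
have : \sum_(y < m) q y <= 0 by apply: sumr_le0 => y _; rewrite leNgt q_le0.
by rewrite q_sum1 ler10.
Qed.

Lemma prob_vec_normalize (w : 'I_m -> R) :
  (forall y, 0 <= w y) -> 0 < \sum_(y < m) w y -> prob_vec (normalize w).
Proof.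
move=> w_ge0 sum_gt0; split=> [y|]; first by rewrite divr_ge0 // ltW.
by rewrite -mulr_suml mulfV // gt_eqF.
Qed.

Lemma exp_loss_normalize (l : ('I_m -> R) -> 'I_m -> R) (p w : 'I_m -> R) :
  exp_loss l p (normalize w) = exp_loss l p w / \sum_(y < m) w y.
Proof. by rewrite /exp_loss mulr_suml; apply: eq_bigr => y _; rewrite mulrAC. Qed.

Lemma normalize_strictly_proper (l : ('I_m -> R) -> 'I_m -> R) (w : 'I_m -> R) :
  strictly_proper l -> (forall y, 0 <= w y) -> 0 < \sum_(y < m) w y ->
  forall p, prob_vec p -> p <> normalize w ->
    exp_loss l (normalize w) w < exp_loss l p w.
Proof.
move=> l_proper w_ge0 sum_gt0 p p_prob p_neq.
have := l_proper _ (prob_vec_normalize w_ge0 sum_gt0) p p_prob p_neq.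
by rewrite !exp_loss_normalize ltr_pM2r // invr_gt0.
Qed.

Variable u : 'I_m -> 'I_m -> R.

Lemma exp_util_ge0 (q : 'I_m -> R) :
  (forall a y, 0 <= u a y) -> prob_vec q -> forall y, 0 <= exp_util u y q.
Proof. by move=> u_ge0 [q_ge0 _] y; apply: sumr_ge0 => y' _; apply: mulr_ge0. Qed.

Lemma sum_exp_util_gt0 (q : 'I_m -> R) :
  (forall a y, 0 <= u a y) -> (forall y, exists a, 0 < u a y) -> prob_vec q ->
  0 < \sum_(a < m) exp_util u a q.
Proof.
move=> u_ge0 u_nondeg q_prob; have [y qy_gt0] := prob_vec_exists_gt0 q_prob.
have [a uay_gt0] := u_nondeg y.
have uqy_le : u a y * q y <= exp_util u a q.
  rewrite /exp_util (bigD1 y) //= lerDl.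
  by apply: sumr_ge0 => y' _; apply: mulr_ge0 => //; case: q_prob.
rewrite (lt_le_trans (mulr_gt0 uay_gt0 qy_gt0)) // (le_trans uqy_le) //.
rewrite (bigD1 a) //= lerDl.
by apply: sumr_ge0 => b _; apply: exp_util_ge0.
Qed.

Lemma exp_loss_util_loss (l : ('I_m -> R) -> 'I_m -> R) (p q : 'I_m -> R) :
  exp_loss (util_loss l u) p q = exp_loss l p (exp_util u ^~ q).
Proof.
rewrite /exp_loss /util_loss.
under eq_bigr => y _ do rewrite big_distrr.
rewrite exchange_big /=; apply: eq_bigr => y' _.
rewrite /exp_util big_distrl /=; apply: eq_bigr => y _.
by rewrite mulrCA mulrC [q y * _]mulrC.
Qed.

End UtilityWeightedLoss.

Theorem theorem1 (R : realFieldType) (m : nat) (hm : (0 < m)%N)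
  (u : 'I_m -> 'I_m -> R) (l : ('I_m -> R) -> 'I_m -> R)
  (u_ge0 : forall a y, 0 <= u a y)
  (u_nondeg : forall y, exists a, 0 < u a y)
  (l_proper : strictly_proper l)
  (q : 'I_m -> R) (hq : prob_vec q) :
  let pu := fun y => exp_util u y q / \sum_(y' < m) exp_util u y' q in
  prob_vec pu /\
  (forall p, prob_vec p -> p <> pu ->
     exp_loss (util_loss l u) pu q < exp_loss (util_loss l u) p q).
Proof.
have w_ge0 := exp_util_ge0 u_ge0 hq.
have sum_gt0 := sum_exp_util_gt0 u_ge0 u_nondeg hq.
split=> [|p p_prob p_neq]; first exact: prob_vec_normalize.
rewrite !exp_loss_util_loss.
exact: normalize_strictly_proper.
Qed.
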